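(* For every $n\ge1$ and every $A\subseteq[n]$, the set-alternating domain $D_X(A)$ is connected: for any two orders in $D_X(A)$, the second can be obtained from the first by a sequence of transpositions of adjacent alternatives such that every intermediate order lies in $D_X(A)$.
   Context: Alternatives are $X=[n]$, with societal axis $1<\dots<n$; linear orders are written as strings, leftmost ranked highest. For $A\subseteq[n]$, $D_X(A)$ is the set of all linear orders $q$ on $[n]$ such that for every triple $i<j<k$: if $j\in A$ then $i$ is not ranked last among $\{i,j,k\}$ in $q$, and if $j\notin A$ then $k$ is not ranked first among $\{i,j,k\}$ in $q$. *)

From mathcomp Require Import all_boot.
Set Implicit Arguments. Unset Strict Implicit. Unset Printing Implicit Defensive.

(* Alternatives are the naturals 1..n; a linear order on [n] is a sequence
   q (leftmost = ranked highest) which is a permutation of [:: 1; ...; n]. *)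
Definition linear_order (n : nat) (q : seq nat) : bool := perm_eq q (iota 1 n).

Definition above (q : seq nat) (x y : nat) : bool := index x q < index y q.

Definition ranked_last (q : seq nat) (x y z : nat) : bool :=
  above q y x && above q z x.
Definition ranked_first (q : seq nat) (x y z : nat) : bool :=
  above q x y && above q x z.

Definition in_DX (n : nat) (A : pred nat) (q : seq nat) : Prop :=
  linear_order n q /\
  forall i j k, 1 <= i -> i < j -> j < k -> k <= n ->
    (A j -> ~~ ranked_last q i j k) /\ (~~ A j -> ~~ ranked_first q k i j).

Definition swap_adj (q : seq nat) (m : nat) : seq nat :=
  take m q ++ [:: nth 0 q m.+1; nth 0 q m] ++ drop m.+2 q.

Definition adj_step (q q' : seq nat) : bool :=
  has (fun m => q' == swap_adj q m) (iota 0 (size q).-1).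

Definition connected_domain (D : seq nat -> Prop) : Prop :=
  forall q1 q2, D q1 -> D q2 ->
    exists p : seq (seq nat),
      [/\ path adj_step q1 p, last q1 p = q2 & forall q, q \in p -> D q].

From mathcomp Require Import all_boot.
From mathcomp Require Import zify.

Set Implicit Arguments.
Unset Strict Implicit.
Unset Printing Implicit Defensive.

(* Bubble sort never leaves D_X(A).  Swapping an adjacent descent b a (b > a)
   into a b creates only the relation "a above b" with a < b, whereas every
   forbidden pattern of D_X(A) ranks larger alternatives above a smaller one
   (j and k above i when i is last, k above i and j when k is first).  The swap
   strictly increases sum_i i * q_i, which is bounded on linear orders, so
   every order of D_X(A) is joined to the identity order 1 2 ... n; two orders
   are joined through it. *)

Lemma swap_adj_cons x q m : swap_adj (x :: q) m.+1 = x :: swap_adj q m.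
Proof. by []. Qed.

Lemma swap_adj0 x y r : swap_adj [:: x, y & r] 0 = [:: y, x & r].
Proof. by rewrite /swap_adj /= drop0. Qed.

Lemma size_swap_adj q m : m.+1 < size q -> size (swap_adj q m) = size q.
Proof.
elim: q m => [|x q IH] [|m] //.
  by case: q {IH} => [|y r] // _; rewrite swap_adj0.
by move=> lt_m; rewrite swap_adj_cons /= IH.
Qed.

Lemma swap_adjK q m : m.+1 < size q -> swap_adj (swap_adj q m) m = q.
Proof.
elim: q m => [|x q IH] [|m] //.
  by case: q {IH} => [|y r] // _; rewrite !swap_adj0.
by move=> lt_m; rewrite !swap_adj_cons IH.
Qed.

Lemma perm_swap_adj q m : m.+1 < size q -> perm_eq (swap_adj q m) q.
Proof.
elim: q m => [|x q IH] [|m] //.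
  by case: q {IH} => [|y r] // _; rewrite swap_adj0 (perm_catCA [:: y] [:: x]).
by move=> lt_m; rewrite swap_adj_cons perm_cons IH.
Qed.

Lemma above_swap_adj q m x y : m.+1 < size q -> above (swap_adj q m) x y ->
  above q x y \/ (x = nth 0 q m.+1 /\ y = nth 0 q m).
Proof.
rewrite /above; elim: q m => [|z q IH] [|m] //.
  case: q {IH} => [|z' r] // _; rewrite swap_adj0 /=.
  by do 4?[case: eqP => [<-|?]] => //= ?; by [left | right].
move=> lt_m; rewrite swap_adj_cons /=.
by do 2?[case: eqP => [<-|?]] => //=;
  [left | rewrite !ltnS => /(IH m lt_m)].
Qed.

Lemma above_swap_descent q m x y :
  m.+1 < size q -> nth 0 q m.+1 < nth 0 q m -> y < x ->
  above (swap_adj q m) x y -> above q x y.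
Proof.
by move=> lt_m desc lt_yx /(above_swap_adj lt_m) [// | [x_eq y_eq]]; lia.
Qed.

Lemma adj_step_swap q m : m.+1 < size q -> adj_step q (swap_adj q m).
Proof. by move=> lt_m; apply/hasP; exists m; rewrite ?mem_iota //; lia. Qed.

Lemma adj_step_sym q q' : adj_step q q' -> adj_step q' q.
Proof.
case/hasP=> m; rewrite mem_iota => /andP[_ lt_m] /eqP ->.
have lt_m1 : m.+1 < size q by lia.
by rewrite -[q in adj_step _ q](swap_adjK lt_m1) adj_step_swap ?size_swap_adj.
Qed.

Lemma connected_domain_to_root (D : seq nat -> Prop) r :
  (forall q, D q -> exists p,
     [/\ path adj_step q p, last q p = r & forall x, x \in p -> D x]) ->
  connected_domain D.
Proof.
move=> to_r q1 q2 Dq1 Dq2.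
have [p1 [path1 last1 D1]] := to_r q1 Dq1.
have [p2 [path2 last2 D2]] := to_r q2 Dq2.
exists (p1 ++ rev (belast q2 p2)); split.
- rewrite cat_path path1 last1 -last2 rev_path /=.
  by apply: sub_path path2 => ? ?; apply: adj_step_sym.
- rewrite last_cat last1 -last2.
  case/lastP: p2 {path2 last2 D2} => [|p x] //.
  by rewrite belast_rcons rev_cons !last_rcons.
- move=> x; rewrite mem_cat mem_rev => /orP[/D1 // | /mem_belast].
  by rewrite inE => /predU1P[-> | /D2].
Qed.

Lemma unsorted_descent (s : seq nat) :
  ~~ sorted leq s -> exists2 m, m.+1 < size s & nth 0 s m.+1 < nth 0 s m.
Proof.
move=> unsorted_s.
have /hasP [m] : has (fun m => nth 0 s m.+1 < nth 0 s m) (iota 0 (size s).-1).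
  apply: contraNT unsorted_s => /hasPn no_descent; apply/(sortedP 0) => i lt_i.
  by rewrite leqNgt; apply: no_descent; rewrite mem_iota; lia.
by rewrite mem_iota => /andP[_ lt_m] desc; exists m => //; lia.
Qed.

Fixpoint weighted_sum (k : nat) (s : seq nat) : nat :=
  if s is x :: s' then k * x + weighted_sum k.+1 s' else 0.

Lemma weighted_sum_le k s : weighted_sum k s <= (k + size s) * sumn s.
Proof. by elim: s k => //= x s IH k; have := IH k.+1; nia. Qed.

Lemma weighted_sum_swap_descent k q m :
  m.+1 < size q -> nth 0 q m.+1 < nth 0 q m ->
  weighted_sum k q < weighted_sum k (swap_adj q m).
Proof.
elim: q m k => [|x q IH] [|m] k //.
  by case: q {IH} => [|y r] // _; rewrite swap_adj0 /=; nia.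
by move=> lt_m desc; rewrite swap_adj_cons /= ltn_add2l; apply: IH.
Qed.

Section SetAlternatingDomain.

Variables (n : nat) (A : pred nat).

Lemma in_DX_swap_descent q m : in_DX n A q ->
  m.+1 < size q -> nth 0 q m.+1 < nth 0 q m -> in_DX n A (swap_adj q m).
Proof.
move=> [lin_q Dq] lt_m desc; split.
  by rewrite /linear_order (perm_trans (perm_swap_adj lt_m)).
have above_kept := above_swap_descent lt_m desc.
move=> i j k ge1_i lt_ij lt_jk le_kn.
have [not_last not_first] := Dq i j k ge1_i lt_ij lt_jk le_kn.
split=> [/not_last | /not_first]; apply: contra => /andP[? ?];
  by apply/andP; split; apply: above_kept => //; lia.
Qed.

Lemma linear_order_sorted q : linear_order n q -> sorted leq q -> q = iota 1 n.
Proof.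
move=> lin_q sorted_q.
by apply: (sorted_eq leq_trans anti_leq) => //; apply: iota_sorted.
Qed.

Lemma in_DX_path_to_iota q : in_DX n A q -> exists p,
  [/\ path adj_step q p, last q p = iota 1 n
    & forall r, r \in p -> in_DX n A r].
Proof.
pose bound := n * sumn (iota 1 n).
have [d] := ubnP (bound - weighted_sum 0 q); elim: d q => // d IH q lt_d Dq.
have [sorted_q | /unsorted_descent [m lt_m desc]] := boolP (sorted leq q).
  by exists [::]; rewrite /= (linear_order_sorted (proj1 Dq) sorted_q).
have Dq' := in_DX_swap_descent Dq lt_m desc.
have le_bound : weighted_sum 0 (swap_adj q m) <= bound.
  have lin := proj1 Dq'; have := weighted_sum_le 0 (swap_adj q m).
  by rewrite (perm_size lin) size_iota (perm_sumn lin).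
have [|p [path_p last_p Dp]] := IH (swap_adj q m) _ Dq'.
  by have := weighted_sum_swap_descent 0 lt_m desc; lia.
exists (swap_adj q m :: p); split=> //=; first by rewrite adj_step_swap.
by move=> r; rewrite inE => /predU1P[-> | /Dp].
Qed.

End SetAlternatingDomain.

Theorem proposition2 (n : nat) (A : pred nat) :
  1 <= n -> (forall x, A x -> 1 <= x <= n) ->
  connected_domain (in_DX n A).
Proof.
by move=> _ _; apply: connected_domain_to_root; apply: in_DX_path_to_iota.
Qed.
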